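(* With $\mathcal I_s$ as defined in the context, the probability that a uniformly random $(E,G_{p,n})\in\mathcal I_s$, with $E$ having constants $c_j=(\bar c_j,\beta_j)$, $j=1,\dots,m$, satisfies $\beta_i\neq1$ for some $i$, tends to $1$ exponentially fast as $s\to\infty$.
   Context: For a prime $p$ and $n\in\mathbb{N}$, $G_{p,n}=\mathbb{Z}_p^n\rtimes\mathbb{Z}_p^\ast$ is the set of pairs $(\bar x,\alpha)$ with $\bar x\in\mathbb{Z}_p^n$, $\alpha\in\mathbb{Z}_p^\ast$, with multiplication $(\bar x,\alpha)(\bar y,\beta)=(\bar x+\alpha\bar y,\alpha\beta)$. For $s\in\mathbb{N}$, $\mathcal I_s$ is the set of all pairs $(E,G_{p,n})$ where $p\le s$ is prime, $1\le n\le s$, $1\le m\le s$, and $E$ is a spherical equation $\prod_{j=1}^m z_j^{-1}c_jz_j=1$ with constants $c_1,\dots,c_m\in G_{p,n}$ (identified with $(c_1,\dots,c_m)\in G_{p,n}^m$), equipped with the uniform distribution. *)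

From HB Require Import structures.
From mathcomp Require Import all_boot all_order all_algebra.
Set Implicit Arguments. Unset Strict Implicit. Unset Printing Implicit Defensive.
Import GRing.Theory Num.Theory.

(* G_{p,n} = Z_p^n ⋊ Z_p^*: elements are pairs (xbar, alpha). *)
Definition Gpn (p n : nat) : finType := ('rV['Z_p]_n * {unit 'Z_p})%type.

Definition Gmul (p n : nat) (g h : Gpn p n) : Gpn p n :=
  ((g.1 + (val g.2) *: h.1)%R, (g.2 * h.2)%g).

(* parameters (p, n, m) allowed in I_s : p <= s prime, 1 <= n <= s, 1 <= m <= s *)
Definition params (s : nat) : finType :=
  { t : 'I_s.+1 * 'I_s.+1 * 'I_s.+1 |
      prime t.1.1 && (0 < t.1.2)%N && (0 < t.2)%N }.

Definition par_p s (t : params s) : nat := (val t).1.1.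
Definition par_n s (t : params s) : nat := (val t).1.2.
Definition par_m s (t : params s) : nat := (val t).2.

(* a spherical equation with m constants c_1..c_m in G_{p,n} is identified
   with (c_1,...,c_m) in G_{p,n}^m *)
Definition eqns s (t : params s) : finType :=
  {ffun 'I_(par_m t) -> Gpn (par_p t) (par_n t)}.

Definition Inst (s : nat) : finType := {t : params s & eqns t}.

Definition some_beta_ne1 s (x : Inst s) : bool :=
  [exists i, val (projT2 x i).2 != 1%R].

Definition prob_beta_ne1 (s : nat) : rat :=
  (#|[set x : Inst s | some_beta_ne1 x]|%:R / #|Inst s|%:R)%R.

From mathcomp Require Import all_boot all_order all_algebra.
From mathcomp Require Import zify.
Import GRing.Theory Num.Theory.
Set Implicit Arguments. Unset Strict Implicit. Unset Printing Implicit Defensive.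

(* For fixed parameters (p, n, m) at most (p^n)^m of the (p^n (p-1))^m
   equations have all beta_i = 1.  Replacing p by max(p, 3) and m by s gives
   parameters with at least (p^n)^m 2^s equations, so each parameter block
   contributes at most |I_s| / 2^s bad instances.  There are at most (s+1)^3
   blocks, hence the bad proportion is at most (s+1)^3 / 2^s <= 32 (3/4)^s. *)

Lemma card_units_Zp_prime p : prime p -> #|{: {unit 'Z_p}}| = p.-1.
Proof.
by move=> p_pr; rewrite -cardsT card_units_Zp ?prime_gt0 // totient_prime.
Qed.

Lemma card_Gpn p n : prime p -> #|{: Gpn p n}| = (p ^ n * p.-1)%N.
Proof.
move=> p_pr; rewrite card_prod card_mx card_ord Zp_cast ?prime_gt1 //.
by rewrite card_units_Zp_prime // mul1n.
Qed.

Section FixedParams.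

Variables (s : nat) (t : params s).

Lemma prime_par_p : prime (par_p t).
Proof. by case/andP: (valP t) => /andP[]. Qed.

Lemma card_eqns :
  #|{: eqns t}| = ((par_p t ^ par_n t * (par_p t).-1) ^ par_m t)%N.
Proof. by rewrite card_ffun card_Gpn ?prime_par_p // card_ord. Qed.

Definition all_beta1 : {set eqns t} :=
  [set f : eqns t | [forall i, val (f i).2 == 1%R]].

Lemma card_all_beta1 : (#|all_beta1| <= (par_p t ^ par_n t) ^ par_m t)%N.
Proof.
pose V := 'rV['Z_(par_p t)]_(par_n t).
pose with_beta1 (h : {ffun 'I_(par_m t) -> V}) : eqns t := [ffun i => (h i, 1%g)].
have sub_img : all_beta1 \subset with_beta1 @: setT.
  apply/subsetP => f; rewrite inE => /forallP beta1.
  apply/imsetP; exists [ffun i => (f i).1]; rewrite ?inE //.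
  apply/ffunP => i; rewrite !ffunE; case: (f i) (beta1 i) => x b /= /eqP b1.
  by congr pair; apply: val_inj.
apply: leq_trans (subset_leq_card sub_img) _.
apply: leq_trans (leq_imset_card _ _) _.
by rewrite cardsT card_ffun card_mx !card_ord mul1n Zp_cast ?prime_gt1 ?prime_par_p.
Qed.

End FixedParams.

(* The witness keeps n, raises p to max(p, 3) so that p - 1 >= 2, and takes m = s. *)
Lemma exists_params_card_eqns_ge s (t : params s) : (3 <= s)%N ->
  exists u : params s,
    ((par_p t ^ par_n t) ^ par_m t * 2 ^ s <= #|{: eqns u}|)%N.
Proof.
move=> s_ge3; have p_pr := prime_par_p t.
have /andP[/andP[_ n_gt0] m_gt0] := valP t.
set p := par_p t in p_pr *; set n := par_n t; set m := par_m t.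
have p'_pr : prime (maxn p 3) by rewrite /maxn; case: ifP.
have p'_le_s : (maxn p 3 < s.+1)%N by rewrite ltnS geq_max -ltnS ltn_ord.
have s_gt0 : (0 < s)%N by apply: leq_trans s_ge3.
have u_ok : prime (maxn p 3) && (0 < (val t).1.2)%N && (0 < s)%N.
  by rewrite p'_pr n_gt0 s_gt0.
pose u : params s := exist _ ((Ordinal p'_le_s, (val t).1.2), ord_max) u_ok.
exists u; rewrite card_eqns expnMn.
have p'_ge3 : (3 <= maxn p 3)%N by rewrite leq_maxr.
apply: leq_mul.
  apply: (@leq_trans ((maxn p 3 ^ n) ^ m)).
    by rewrite leq_exp2r // leq_exp2r ?leq_maxl.
  apply: leq_pexp2l; first by rewrite expn_gt0 (leq_trans _ p'_ge3).
  by rewrite -ltnS ltn_ord.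
by rewrite leq_exp2r // -subn1 leq_subRL // (leq_trans _ p'_ge3).
Qed.

Definition not_beta_ne1 s : {set Inst s} := [set x | ~~ some_beta_ne1 x].

Lemma card_not_beta_ne1_le_sum s :
  (#|not_beta_ne1 s| <= \sum_(t : params s) #|all_beta1 t|)%N.
Proof.
rewrite -sum1_card (partition_big (fun x : Inst s => tag x) predT) //=.
apply: leq_sum => t _; rewrite sum1_card.
apply: leq_trans (leq_imset_card (Tagged (fun t => eqns t) (i:=t)) _).
apply/subset_leq_card/subsetP => -[t' f] /andP[/= bad /eqP tt']; subst t'.
apply/imsetP; exists f => //; rewrite inE; apply/forallP => i.
by move: bad; rewrite inE; apply: contraR => beta_ne1; apply/existsP; exists i.
Qed.

Lemma card_eqns_le_Inst s (u : params s) : (#|{: eqns u}| <= #|{: Inst s}|)%N.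
Proof.
by apply: (leq_card (Tagged (fun t => eqns t) (i:=u))) => f g; apply: eq_from_Tagged.
Qed.

Lemma card_params s : (#|{: params s}| <= s.+1 ^ 3)%N.
Proof.
have := leq_card (fun t : params s => val t) val_inj.
by rewrite !card_prod !card_ord !expnS expn0 muln1 mulnA.
Qed.

Lemma card_not_beta_ne1_mul_exp2 s : (3 <= s)%N ->
  (#|not_beta_ne1 s| * 2 ^ s <= s.+1 ^ 3 * #|{: Inst s}|)%N.
Proof.
move=> s_ge3.
apply: leq_trans (leq_mul (card_not_beta_ne1_le_sum s) (leqnn _)) _.
rewrite big_distrl /=.
apply: (@leq_trans (\sum_(t : params s) #|{: Inst s}|)).
  apply: leq_sum => t _; have [u card_u] := exists_params_card_eqns_ge t s_ge3.
  apply: leq_trans (card_eqns_le_Inst u).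
  by apply: leq_trans card_u; rewrite leq_mul2r card_all_beta1 orbT.
by rewrite sum_nat_const leq_mul2r card_params orbT.
Qed.

Lemma cube_succ_mul_exp2_le s : (s.+1 ^ 3 * 2 ^ s <= 32 * 3 ^ s)%N.
Proof.
elim: s => [|s IHs] //; have [s_lt6 | s_ge6] := ltnP s 6.
  by case: s IHs s_lt6 => [|[|[|[|[|[|]]]]]].
rewrite [2 ^ _]expnS [3 ^ _]expnS.
have cube_ratio : (2 * s.+2 ^ 3 <= 3 * s.+1 ^ 3)%N.
  rewrite -(subnK s_ge6); move: (s - 6)%N => k; rewrite !expnS expn0; nia.
apply: (@leq_trans (3 * (s.+1 ^ 3 * 2 ^ s))).
  by rewrite mulnCA mulnA mulnA leq_mul2r cube_ratio orbT.
by rewrite [32 * _]mulnCA leq_mul2l IHs orbT.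
Qed.

Lemma card_not_beta_ne1_mul_exp4 s : (2 <= s)%N ->
  (#|not_beta_ne1 s| * 4 ^ s <= 32 * 3 ^ s * #|{: Inst s}|)%N.
Proof.
move=> s_ge2; have [s_lt3 | s_ge3] := ltnP s 3.
  have -> : s = 2 by apply/eqP; rewrite eqn_leq s_ge2 -ltnS s_lt3.
  by rewrite mulnC leq_mul ?max_card.
rewrite (_ : 4 = 2 * 2)%N // expnMn mulnA.
apply: leq_trans (_ : s.+1 ^ 3 * #|{: Inst s}| * 2 ^ s <= _)%N.
  by rewrite leq_mul2r card_not_beta_ne1_mul_exp2 ?orbT.
by rewrite mulnAC leq_mul2r cube_succ_mul_exp2_le orbT.
Qed.

Lemma card_Inst_gt0 s : (2 <= s)%N -> (0 < #|{: Inst s}|)%N.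
Proof.
move=> s_ge2; have two_lt : (2 < s.+1)%N by []; have one_lt : (1 < s.+1)%N by lia.
pose t : params s := exist _ ((Ordinal two_lt, Ordinal one_lt), Ordinal one_lt) isT.
by apply/card_gt0P; exists (Tagged (fun t => eqns t) ([ffun _ => (0%R, 1%g)] : eqns t)).
Qed.

Local Open Scope ring_scope.

Lemma one_sub_prob_beta_ne1 s : (2 <= s)%N ->
  1 - prob_beta_ne1 s = #|not_beta_ne1 s|%:R / #|{: Inst s}|%:R.
Proof.
move=> s_ge2; have Inst_neq0 : #|{: Inst s}|%:R != 0 :> rat.
  by rewrite pnatr_eq0 -lt0n card_Inst_gt0.
have -> : not_beta_ne1 s = ~: [set x | some_beta_ne1 x].
  by apply/setP => x; rewrite !inE.
rewrite /prob_beta_ne1 -{1}(divff Inst_neq0) -mulrBl.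
by rewrite -(cardsC [set x | some_beta_ne1 x]) natrD addrC addKr.
Qed.

Theorem lemma4p4 :
  exists (C q : rat), 0 < C /\ 0 < q < 1 /\
    forall s : nat, (2 <= s)%N -> 1 - prob_beta_ne1 s <= C * q ^+ s.
Proof.
exists 32%:R, (3%:R / 4%:R); split; first by [].
split; first by [].
move=> s s_ge2; rewrite one_sub_prob_beta_ne1 //.
have Inst_gt0 : 0 < #|{: Inst s}|%:R :> rat by rewrite ltr0n card_Inst_gt0.
have exp4_gt0 : 0 < 4%:R ^+ s :> rat by apply: exprn_gt0.
rewrite (ler_pdivrMr _ _ Inst_gt0) expr_div_n mulrA mulrAC (ler_pdivlMr _ _ exp4_gt0).
by rewrite -!natrX -!natrM ler_nat card_not_beta_ne1_mul_exp4.
Qed.
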